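(* Let $\mathfrak g$ be a semisimple Lie algebra of $r\times r$ matrices, identified with its dual via the trace form, let $N\ge 1$, let $a_1,\dots,a_N$ be pairwise distinct complex numbers and let $\sigma\in\mathfrak g$ be a fixed constant matrix. On $\mathfrak g^N\ni(A_1,\dots,A_N)$ introduce the new coordinates $B_0,\dots,B_{N-1}$ by $$B_l=(-1)^{N-l-1}\sum_{i=1}^N s_{N-l-1}(a_1,\dots,\widehat{a_i},\dots,a_N)\,A_i+(-1)^{N-l}s_{N-l}(a_1,\dots,a_N)\,\sigma,\qquad l=0,\dots,N-1,$$ (so that $\lambda^N\sigma+\sum_{i=0}^{N-1}B_i\lambda^i=\prod_{i=1}^N(\lambda-a_i)\cdot\big(\sigma+\sum_{i=1}^N\frac{A_i}{\lambda-a_i}\big)$), and set $B_N=\sigma$, $B_k=0$ for $k<0$ or $k>N$. For $l=0,\dots,N$ let $\Pi_l$ be the Poisson tensor given in these coordinates by the $N\times N$ block-diagonal operator matrix $\Pi_l=\begin{pmatrix}C_l&0\\0&D_l\end{pmatrix}$ with $(C_l)_{ij}=-[B_{i+j-l-1},\cdot\,]$ for $i,j=1,\dots,l$ and $(D_l)_{ij}=[B_{i+j+l-1},\cdot\,]$ for $i,j=1,\dots,N-l$, where rows and columns are indexed in order by $B_0,\dots,B_{N-1}$. Then the diagonal Lie–Poisson tensor $P$ on $\mathfrak g^N$ is, in the coordinates $B_0,\dots,B_{N-1}$, given by $$P=\sum_{l=0}^N(-1)^{N-l-1}s_{N-l}(a_1,\dots,a_N)\,\Pi_l .$$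
   Context: $s_k(x_1,\dots,x_m)$ denotes the $k$-th elementary symmetric polynomial ($s_0=1$, $s_k=0$ for $k<0$ or $k>m$), and a hat denotes omission. For a smooth function $F$ on $\mathfrak g^N$, $\partial F/\partial A_i\in\mathfrak g$ is defined by $F(\dots,A_i+t\Xi,\dots)=F+t\,\mathrm{Tr}(\frac{\partial F}{\partial A_i}\Xi)+o(t)$ for all $\Xi\in\mathfrak g$ (similarly for $\partial F/\partial B_j$). A tensor $T$ represented by an operator matrix $(T_{ij})$ acts by $(T\,dF)_i=\sum_j T_{ij}(\partial F/\partial X_j)$ and defines the bracket $\{F,G\}_T=\sum_i\mathrm{Tr}\big(\frac{\partial F}{\partial X_i}(T\,dG)_i\big)$, where $X_j$ are the coordinates in use. The diagonal Lie–Poisson tensor $P$ is given in the coordinates $A_1,\dots,A_N$ by $(P\,dF)_i=[A_i,\partial F/\partial A_i]$, $i=1,\dots,N$ (diagonal operator matrix with entries $[A_i,\cdot\,]$). *)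

From HB Require Import structures.
From mathcomp Require Import all_boot all_order all_algebra.
From mathcomp Require Import reals.
From mathcomp Require Import complex.
Set Implicit Arguments. Unset Strict Implicit. Unset Printing Implicit Defensive.
Import Order.TTheory GRing.Theory Num.Theory.
Local Open Scope ring_scope.

Section Defs.
Variable (C : fieldType) (r : nat).
Local Notation mat := 'M[C]_r.

Definition lbr (X Y : mat) : mat := X *m Y - Y *m X.

Definition lie_subalgebra (g : {vspace mat}) :=
  forall X Y, X \in g -> Y \in g -> lbr X Y \in g.

Definition lie_ideal (g I : {vspace mat}) :=
  (I <= g)%VS /\ forall X Y, X \in g -> Y \in I -> lbr X Y \in I.

(* derived algebra [I, I] : span of all brackets (spanned by brackets of basis vectors) *)
Definition derived (I : {vspace mat}) : {vspace mat} :=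
  <<[seq lbr X Y | X <- vbasis I, Y <- vbasis I]>>%VS.

Definition lie_solvable (I : {vspace mat}) := exists k, iter k derived I = 0%VS.

Definition semisimple (g : {vspace mat}) :=
  lie_subalgebra g /\ forall I, lie_ideal g I -> lie_solvable I -> I = 0%VS.

Definition elsym (s : seq C) (k : nat) : C :=
  \sum_(S : {set 'I_(size s)} | #|S| == k) \prod_(i in S) s`_i.

Variable (N : nat) (a : 'I_N -> C) (sigma : mat).

Definition a_all : seq C := [seq a j | j <- enum 'I_N].
Definition a_hat (i : 'I_N) : seq C := [seq a j | j <- enum 'I_N & j != i].

Definition Mcoef (l : nat) (i : 'I_N) : C :=
  (-1) ^+ (N - l - 1) * elsym (a_hat i) (N - l - 1).

(* new coordinates B_l, l = 0..N-1 (l, N-l-1 >= 0 in this range) *)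
Definition Bcoord (A : 'I_N -> mat) (l : nat) : mat :=
  \sum_(i < N) Mcoef l i *: A i + ((-1) ^+ (N - l) * elsym a_all (N - l)) *: sigma.

Definition Bext (A : 'I_N -> mat) (k : int) : mat :=
  match k with
  | Posz n => if (n < N)%N then Bcoord A n else if n == N then sigma else 0
  | Negz _ => 0
  end.

(* Entry (p,q) (0-based: p,q index B_0..B_{N-1}) of Pi_l applied to X.
   Paper's 1-based block indices: C_l block for p,q < l with i = p+1, j = q+1;
   D_l block for p,q >= l with i = p-l+1, j = q-l+1. *)
Definition Pi_entry (A : 'I_N -> mat) (l : nat) (p q : 'I_N) (X : mat) : mat :=
  if ((p < l) && (q < l))%N then
    - lbr (Bext A ((p.+1)%:Z + (q.+1)%:Z - l%:Z - 1)) X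
  else if ((l <= p) && (l <= q))%N then
    lbr (Bext A ((p - l).+1%:Z + (q - l).+1%:Z + l%:Z - 1)) X
  else 0.

(* bracket {F,G}_{Pi_l} at the point A, for B-coordinate differentials xi = dF, eta = dG *)
Definition Pi_bracket (A : 'I_N -> mat) (l : nat) (xi eta : 'I_N -> mat) : C :=
  \sum_(p < N) \tr (xi p *m \sum_(q < N) Pi_entry A l p q (eta q)).

(* chain rule: dF/dA_i = sum_l Mcoef l i * dF/dB_l *)
Definition dA (xi : 'I_N -> mat) (i : 'I_N) : mat :=
  \sum_(l < N) Mcoef l i *: xi l.

Definition P_bracket (A : 'I_N -> mat) (xi eta : 'I_N -> mat) : C :=
  \sum_(i < N) \tr (dA xi i *m lbr (A i) (dA eta i)).

End Defs.

From HB Require Import structures.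
From mathcomp Require Import all_boot all_order all_algebra.
From mathcomp Require Import reals.
From mathcomp Require Import complex.
From mathcomp Require Import zify ring.
Import Order.TTheory GRing.Theory Num.Theory.
Set Implicit Arguments. Unset Strict Implicit. Unset Printing Implicit Defensive.
Local Open Scope ring_scope.

(** Put [P = \prod_j ('X - a_j)] and [Q_i = P / ('X - a_i)].  The new coordinates are
    [B_m = \sum_i (Q_i)_m A_i + P_m sigma] for every [m], and the chain rule reads
    [dF/dA_i = \sum_l (Q_i)_l dF/dB_l].  Hence both brackets have the form
    [\sum_(p,q) Tr (xi_p [M_pq, eta_q])]: for the diagonal tensor
    [M_pq = \sum_i (Q_i)_p (Q_i)_q A_i], and for the pencil
    [M_pq = - \sum_l P_l e_pq(l) B_(p+q+1-l)], where the sign [e_pq(l)] tells in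
    which diagonal block of [Pi_l] the entry [(p,q)] lies.  Expanding the [B]'s, the
    coefficients of [A_i] and [sigma] in the latter are [- W_pq(P, Q_i)] and
    [- W_pq(P, P)] for the bilinear form [W_pq(F, H) = \sum_k e_pq(k) F_k H_(p+q+1-k)].
    This form is antisymmetric and satisfies
    [W_pq('X F, H) - W_pq(F, 'X H) = -(F_p H_q + F_q H_p)], so [P = ('X - a_i) Q_i]
    gives [W_pq(P, Q_i) = -(Q_i)_p (Q_i)_q], while [W_pq(P, P) = 0]. *)

Section BlockForm.
Variable C : comNzRingType.
Implicit Types F H G : {poly C}.

Definition block_sign (p q k : nat) : C :=
  if ((k <= p) && (k <= q))%N then 1
  else if ((p < k) && (q < k))%N then -1 else 0.

Definition block_form (p q : nat) F H : C :=
  \sum_(k < (p + q).+2) F`_k * H`_((p + q).+1 - k) * block_sign p q k.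

Ltac block_sign_cases :=
  rewrite /block_sign; repeat case: ifP => ?; repeat case: eqP => ?;
  try (exfalso; lia); simpl; ring.

Lemma block_sign_rev p q k :
  (k <= (p + q).+1)%N -> block_sign p q ((p + q).+1 - k) = - block_sign p q k.
Proof. by move=> ?; block_sign_cases. Qed.

Lemma block_signS p q k :
  block_sign p q k.+1 - block_sign p q k = - ((k == p)%:R + (k == q)%:R).
Proof. by block_sign_cases. Qed.

Lemma block_form_antisym p q F H : block_form p q F H = - block_form p q H F.
Proof.
rewrite /block_form (reindex_inj rev_ord_inj) /= -sumrN.
apply: eq_bigr => k _; have hk : (k <= (p + q).+1)%N by have := ltn_ord k; lia.
rewrite block_sign_rev ?leq_subr // subKn //; ring.
Qed.

Lemma block_form_linl p q F1 F2 c H :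
  block_form p q (F1 - c%:P * F2) H = block_form p q F1 H - c * block_form p q F2 H.
Proof.
rewrite /block_form mulr_sumr -sumrB; apply: eq_bigr => k _.
by rewrite coefB coefCM; ring.
Qed.

Lemma sum_ord_mul_delta n (f : nat -> C) p :
  (p < n)%N -> \sum_(j < n) f j * (j == p :> nat)%:R = f p.
Proof.
move=> hp; rewrite (bigD1 (Ordinal hp)) //= eqxx mulr1 big1 ?addr0 // => j hj.
by case: eqP => [hjp|]; [case/eqP: hj; apply: val_inj | rewrite mulr0].
Qed.

(* The two sums differ by the jumps of [block_sign] at [k = p] and [k = q]. *)
Lemma block_form_shift p q F H :
  block_form p q ('X * F) H - block_form p q F ('X * H) =
  - (F`_p * H`_q + F`_q * H`_p).
Proof.
set n := (p + q)%N; set f := fun j => F`_j * H`_(n - j).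
have -> : block_form p q ('X * F) H = \sum_(j < n.+1) f j * block_sign p q j.+1.
  rewrite /block_form big_ord_recl /= coefXM eqxx !mul0r add0r.
  by apply: eq_bigr => j _; rewrite coefXM /= subSS.
have -> : block_form p q F ('X * H) = \sum_(j < n.+1) f j * block_sign p q j.
  rewrite /block_form big_ord_recr /= subnn coefXM eqxx mulr0 mul0r addr0.
  apply: eq_bigr => j _; have := ltn_ord j; rewrite coefXM /f /= => hj.
  have -> : (n.+1 - j == 0)%N = false by lia.
  by rewrite subSn.
rewrite -sumrB.
under eq_bigr => j _ do rewrite -mulrBr block_signS mulrN mulrDr.
rewrite sumrN big_split /= !sum_ord_mul_delta /f ?addKn ?addnK //; lia.
Qed.

End BlockForm.

Lemma block_form_diag (C : numDomainType) p q (G : {poly C}) : block_form p q G G = 0.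
Proof.
have : block_form p q G G *+ 2 == 0 by rewrite mulr2n {1}block_form_antisym addNr.
by rewrite mulrn_eq0 => /eqP.
Qed.

Lemma block_form_XsubC (C : numDomainType) p q c (G : {poly C}) :
  block_form p q (('X - c%:P) * G) G = - (G`_p * G`_q).
Proof.
rewrite mulrBl block_form_linl block_form_diag mulr0 subr0.
have := block_form_shift p q G G; rewrite [X in _ - X]block_form_antisym opprK => h.
suff : (block_form p q ('X * G) G + G`_p * G`_q) *+ 2 == 0.
  by rewrite mulrn_eq0 /= addr_eq0 => /eqP.
by rewrite mulr2n addrACA h; apply/eqP; ring.
Qed.

Section Bracket.
Variables (C : fieldType) (r : nat).
Implicit Types X Y : 'M[C]_r.

Lemma lbrZl c X Y : lbr (c *: X) Y = c *: lbr X Y.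
Proof. by rewrite /lbr -scalemxAl -scalemxAr scalerBr. Qed.

Lemma lbrZr c X Y : lbr X (c *: Y) = c *: lbr X Y.
Proof. by rewrite /lbr -scalemxAl -scalemxAr scalerBr. Qed.

Lemma lbr_suml (I : Type) (s : seq I) (F : I -> 'M[C]_r) Y :
  lbr (\sum_(i <- s) F i) Y = \sum_(i <- s) lbr (F i) Y.
Proof. by rewrite /lbr mulmx_suml mulmx_sumr -sumrB. Qed.

Lemma lbr_sumr (I : Type) (s : seq I) X (F : I -> 'M[C]_r) :
  lbr X (\sum_(i <- s) F i) = \sum_(i <- s) lbr X (F i).
Proof. by rewrite /lbr mulmx_suml mulmx_sumr -sumrB. Qed.

Lemma mxtrace_mul_lbr_suml (I : Type) (s : seq I) (c : I -> C) (M : I -> 'M[C]_r) X Y :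
  \tr (X *m lbr (\sum_(i <- s) c i *: M i) Y) =
  \sum_(i <- s) c i * \tr (X *m lbr (M i) Y).
Proof.
rewrite lbr_suml mulmx_sumr linear_sum; apply: eq_bigr => i _.
by rewrite /= lbrZl -scalemxAr mxtraceZ.
Qed.

End Bracket.

Lemma sum_ord_widen0 (V : nmodType) m n (F : nat -> V) :
  (m <= n)%N -> (forall k, (m <= k < n)%N -> F k = 0) ->
  \sum_(k < m) F k = \sum_(k < n) F k.
Proof.
move=> hmn F0; rewrite (big_ord_widen n F hmn) big_mkcond.
by apply: eq_bigr => k _; case: ltnP => // hk; rewrite F0 // hk ltn_ord.
Qed.

Section Coordinates.
Variables (C : numFieldType) (r N : nat) (a : 'I_N -> C) (sigma : 'M[C]_r).

Definition nodal_poly : {poly C} := \prod_(j < N) ('X - (a j)%:P).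
Definition nodal_poly_but (i : 'I_N) : {poly C} :=
  \prod_(j < N | j != i) ('X - (a j)%:P).

Local Notation P := nodal_poly.
Local Notation Q := nodal_poly_but.

Lemma nodal_polyE : P = \prod_(x <- a_all a) ('X - x%:P).
Proof. by rewrite /P /a_all big_map enumT. Qed.

Lemma nodal_poly_butE i : Q i = \prod_(x <- a_hat a i) ('X - x%:P).
Proof. by rewrite /Q /a_hat big_map big_filter enumT. Qed.

Lemma size_a_hat i : size (a_hat a i) = N.-1.
Proof.
rewrite size_map size_filter.
have hi : count (predC (fun j => j != i)) (enum 'I_N) = 1%N.
  rewrite (eq_count (a2 := pred1 i)) => [|j /=]; last by rewrite negbK.
  by rewrite count_uniq_mem ?enum_uniq // mem_enum.
by rewrite -[in RHS](size_enum_ord N) -(count_predC (fun j => j != i)) hi addn1.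
Qed.

Lemma size_nodal_poly : size P = N.+1.
Proof. by rewrite nodal_polyE size_prod_XsubC size_map size_enum_ord. Qed.

Lemma size_nodal_poly_but i : size (Q i) = N.
Proof.
rewrite nodal_poly_butE size_prod_XsubC size_a_hat prednK //.
exact: leq_ltn_trans (ltn_ord i).
Qed.

Lemma nodal_poly_factor i : P = ('X - (a i)%:P) * Q i.
Proof. by rewrite /P (bigD1 i). Qed.

Lemma Mcoef_nodal l i : (l < N)%N -> Mcoef a l i = (Q i)`_l.
Proof.
move=> hl; rewrite nodal_poly_butE coef_prod_XsubC; last by rewrite size_a_hat; lia.
rewrite /Mcoef /elsym; suff -> : (N - l - 1 = size (a_hat a i) - l)%N by [].
by rewrite size_a_hat; lia.
Qed.

Lemma nodal_coef l : (l <= N)%N ->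
  (-1) ^+ (N - l) * elsym (a_all a) (N - l) = P`_l.
Proof.
have hs : size (a_all a) = N by rewrite size_map size_enum_ord.
move=> hl; rewrite nodal_polyE coef_prod_XsubC; last by rewrite hs.
by rewrite /elsym hs.
Qed.

Lemma Pi_weightE l : (l <= N)%N ->
  (-1) ^ (N%:Z - l%:Z - 1) * elsym (a_all a) (N - l) = - P`_l.
Proof.
move=> hl; rewrite -nodal_coef // subzn // expfzDr ?oppr_eq0 ?oner_eq0 //.
by rewrite exprN1 invrN1 mulrN1 mulNr.
Qed.

Definition Bcoef (A : 'I_N -> 'M[C]_r) (m : nat) : 'M[C]_r :=
  \sum_(i < N) (Q i)`_m *: A i + P`_m *: sigma.

Lemma Bext_Posz A m : Bext a sigma A m%:Z = Bcoef A m.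
Proof.
have Q_big i : (N <= m)%N -> (Q i)`_m = 0.
  by move=> hm; rewrite nth_default // size_nodal_poly_but.
rewrite /Bext /Bcoef; case: ltnP => hm.
  rewrite /Bcoord nodal_coef 1?ltnW //.
  by congr (_ + _); apply: eq_bigr => i _; rewrite Mcoef_nodal.
rewrite big1 ?add0r => [|i _]; last by rewrite Q_big ?scale0r.
case: eqP => [->|hN].
  have /monicP : P \is monic by apply: monic_prod_XsubC.
  by rewrite lead_coefE size_nodal_poly => ->; rewrite scale1r.
by rewrite nth_default ?scale0r // size_nodal_poly; lia.
Qed.

Lemma Bext_lt0 A (m k : nat) : (m < k)%N -> Bext a sigma A (m%:Z - k%:Z) = 0.
Proof. by move=> h; have -> : m%:Z - k%:Z = Negz (k - m.+1) by rewrite NegzE; lia. Qed.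

Lemma sum_scale_Bcoef A n (c : nat -> C) :
  \sum_(k < n.+1) c k *: Bcoef A (n - k) =
  \sum_(i < N) (\sum_(k < n.+1) c k * (Q i)`_(n - k)) *: A i
  + (\sum_(k < n.+1) c k * P`_(n - k)) *: sigma.
Proof.
under eq_bigr do rewrite scalerDr scaler_sumr.
rewrite big_split /= exchange_big /= scaler_suml; congr (_ + _).
  by apply: eq_bigr => i _; rewrite scaler_suml; apply: eq_bigr => k _; rewrite scalerA.
by apply: eq_bigr => k _; rewrite scalerA.
Qed.

Lemma Pi_entry_block_sign A l (p q : 'I_N) X :
  Pi_entry a sigma A l p q X =
  lbr (block_sign C p q l *: Bext a sigma A ((p + q).+1%:Z - l%:Z)) X.
Proof.
rewrite /Pi_entry /block_sign lbrZl; case: ifP => [/andP[hp hq]|_].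
  rewrite ifF ?scaleN1r; last by lia.
  by congr (- lbr (Bext a sigma A _) X); lia.
case: ifP => [/andP[hp hq]|_]; last by rewrite scale0r.
by rewrite scale1r; congr (lbr (Bext a sigma A _) X); lia.
Qed.

Lemma Pi_pencil_entry A (p q : 'I_N) :
  \sum_(l < N.+1) ((-1) ^ (N%:Z - l%:Z - 1) * elsym (a_all a) (N - l)) *:
      (block_sign C p q l *: Bext a sigma A ((p + q).+1%:Z - l%:Z))
  = \sum_(i < N) ((Q i)`_p * (Q i)`_q) *: A i.
Proof.
set n := (p + q).+1.
pose G k := (- P`_k * block_sign C p q k) *: Bext a sigma A (n%:Z - k%:Z).
(* Both ranges extend to [N + n + 2]: [P_k = 0] if [k > N], [B_(n-k) = 0] if [k > n]. *)
transitivity (\sum_(k < N.+1) G k).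
  by apply: eq_bigr => l _; rewrite (Pi_weightE (ltn_ord l)) scalerA.
rewrite (@sum_ord_widen0 _ _ (N.+1 + n.+1)) ?leq_addr // => [|k /andP[hk _]]; last first.
  by rewrite /G nth_default ?size_nodal_poly // oppr0 mul0r scale0r.
rewrite -(@sum_ord_widen0 _ n.+1) ?leq_addl // => [|k /andP[hk _]]; last first.
  by rewrite /G Bext_lt0 ?scaler0.
transitivity (\sum_(k < n.+1) (- P`_k * block_sign C p q k) *: Bcoef A (n - k)).
  apply: eq_bigr => k _; have hk : (k <= n)%N := ltn_ord k.
  by rewrite /G subzn // Bext_Posz.
have block_formE (H : {poly C}) :
    \sum_(k < n.+1) (- P`_k * block_sign C p q k) * H`_(n - k) = - block_form p q P H.
  by rewrite /block_form -sumrN; apply: eq_bigr => k _; ring.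
rewrite (sum_scale_Bcoef A n (fun k => - P`_k * block_sign C p q k)).
rewrite block_formE block_form_diag oppr0 scale0r addr0.
apply: eq_bigr => i _.
by rewrite block_formE {1}(nodal_poly_factor i) block_form_XsubC opprK.
Qed.

Lemma P_bracket_expand (A xi eta : 'I_N -> 'M[C]_r) :
  P_bracket a A xi eta = \sum_(p < N) \sum_(q < N)
    \tr (xi p *m lbr (\sum_(i < N) ((Q i)`_p * (Q i)`_q) *: A i) (eta q)).
Proof.
under [RHS]eq_bigr => p _ do under eq_bigr => q _ do rewrite mxtrace_mul_lbr_suml.
under [RHS]eq_bigr => p _ do rewrite exchange_big /=.
rewrite [RHS]exchange_big /=; apply: eq_bigr => i _.
rewrite /dA mulmx_suml linear_sum; apply: eq_bigr => p _.
rewrite /= -scalemxAl mxtraceZ lbr_sumr mulmx_sumr linear_sum /= mulr_sumr.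
apply: eq_bigr => q _; rewrite lbrZr -scalemxAr mxtraceZ !Mcoef_nodal //; exact: mulrA.
Qed.

Lemma Pi_bracket_expand (A : 'I_N -> 'M[C]_r) l (xi eta : 'I_N -> 'M[C]_r) :
  Pi_bracket a sigma A l xi eta = \sum_(p < N) \sum_(q < N)
    \tr (xi p *m lbr (block_sign C p q l *: Bext a sigma A ((p + q).+1%:Z - l%:Z)) (eta q)).
Proof.
apply: eq_bigr => p _; rewrite mulmx_sumr linear_sum.
by apply: eq_bigr => q _; rewrite Pi_entry_block_sign.
Qed.

Theorem P_bracket_Pi_pencil (A xi eta : 'I_N -> 'M[C]_r) :
  P_bracket a A xi eta =
  \sum_(l < N.+1) (-1) ^ (N%:Z - l%:Z - 1) * elsym (a_all a) (N - l)
                  * Pi_bracket a sigma A l xi eta.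
Proof.
rewrite P_bracket_expand.
under [RHS]eq_bigr => l _ do rewrite Pi_bracket_expand mulr_sumr.
rewrite [RHS]exchange_big; apply: eq_bigr => p _.
under [RHS]eq_bigr => l _ do rewrite mulr_sumr.
rewrite [RHS]exchange_big; apply: eq_bigr => q _.
by rewrite -Pi_pencil_entry mxtrace_mul_lbr_suml.
Qed.

End Coordinates.

Theorem lemma1 (R : realType) (r N : nat) (g : {vspace 'M[R[i]]_r})
    (a : 'I_N -> R[i]) (sigma : 'M[R[i]]_r) :
  semisimple g -> (0 < N)%N -> injective a -> sigma \in g ->
  forall (A xi eta : 'I_N -> 'M[R[i]]_r),
    (forall i, A i \in g) -> (forall l, xi l \in g) -> (forall l, eta l \in g) ->
    P_bracket a A xi eta =
    \sum_(l < N.+1)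
       (-1) ^ ((N%:Z - l%:Z - 1)%R) * elsym (a_all a) (N - l)
       * Pi_bracket a sigma A l xi eta.
Proof.
by move=> _ _ _ _ A xi eta _ _ _; apply: P_bracket_Pi_pencil.
Qed.
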